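(* Let $\mathcal A=(a_{ij})$ be a symmetric $3\times3$ matrix (indices $0,1,2$) and let $\mathcal B$ be the symmetric matrix with $b_{22}=1$ and all other entries $0$. Let $\mathbf V(s,t)=(s^2,st,t^2)^T$, $\mathbf F(s,t)=(\mathcal A\mathbf V(s,t))\times(\mathcal B\mathbf V(s,t))=(F^{(1)},F^{(2)},F^{(3)})^T$, $Q(s,t)=(F^{(2)})^2-F^{(1)}F^{(3)}$. Put $a_1=a_{00}$, $a_2=a_{01}$, $a_3=a_{02}$, $a_4=a_{11}$, $a_5=a_{12}$, and let $(k_n,l_n)$ be a sequence of nonzero numbers satisfying $$k_{n+1}l_{n-1}=-\big(k_{n-1}l_{n+1}+a_2k_n^2+a_4k_nl_n+a_5l_n^2\big),\qquad l_{n+1}l_{n-1}=a_1k_n^2+a_2k_nl_n+a_3l_n^2 .$$ Then $r_n=-l_n^2l_{n+1}^2$, $s_n=k_n$, $t_n=l_n$ satisfy the system $$r_nr_{n-1}=Q(s_n,t_n),\quad s_{n+1}r_{n-1}=t_{n-1}F^{(1)}(s_n,t_n)-s_{n-1}F^{(2)}(s_n,t_n),\quad t_{n+1}r_{n-1}=t_{n-1}F^{(2)}(s_n,t_n)-s_{n-1}F^{(3)}(s_n,t_n).$$ *)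

From mathcomp Require Import all_boot all_algebra.
Set Implicit Arguments. Unset Strict Implicit. Unset Printing Implicit Defensive.
Import GRing.Theory.
Local Open Scope ring_scope.

Definition i0 : 'I_3 := @Ordinal 3 0 isT.
Definition i1 : 'I_3 := @Ordinal 3 1 isT.
Definition i2 : 'I_3 := @Ordinal 3 2 isT.

Definition Vvec (R : ringType) (s t : R) : 'cV[R]_3 :=
  \col_(i < 3) (if val i == 0%N then s ^+ 2
                else if val i == 1%N then s * t else t ^+ 2).

Definition Bmat (R : ringType) : 'M[R]_3 :=
  \matrix_(i < 3, j < 3) ((val i == 2%N) && (val j == 2%N))%:R.

Definition cross (R : ringType) (u v : 'cV[R]_3) : 'cV[R]_3 :=
  \col_(i < 3) (if val i == 0%N then u i1 0 * v i2 0 - u i2 0 * v i1 0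
                else if val i == 1%N then u i2 0 * v i0 0 - u i0 0 * v i2 0
                else u i0 0 * v i1 0 - u i1 0 * v i0 0).

Definition Fvec (R : ringType) (A : 'M[R]_3) (s t : R) : 'cV[R]_3 :=
  cross (A *m Vvec s t) (Bmat R *m Vvec s t).

Definition F1 (R : ringType) (A : 'M[R]_3) s t : R := Fvec A s t i0 0.
Definition F2 (R : ringType) (A : 'M[R]_3) s t : R := Fvec A s t i1 0.
Definition F3 (R : ringType) (A : 'M[R]_3) s t : R := Fvec A s t i2 0.

Definition Qf (R : ringType) (A : 'M[R]_3) s t : R :=
  F2 A s t ^+ 2 - F1 A s t * F3 A s t.

(** Since [B V(s,t) = (0, 0, t^2)^T], the cross product gives
    [F = t^2 (A_1 V, -A_0 V, 0)] where [A_i] is the i-th row of [A].  The two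
    recurrences say precisely that [A_0 V(k_n, l_n) = l_(n+1) l_(n-1)] and, by the
    symmetry [a_10 = a_01], [A_1 V(k_n, l_n) = -(k_(n+1) l_(n-1) + k_(n-1) l_(n+1))];
    substituting these, the three identities become polynomial identities. *)

From mathcomp Require Import all_boot all_algebra.
From mathcomp Require Import ring.
Import GRing.Theory.
Local Open Scope ring_scope.

Section CrossProductFormulas.

Variables (R : comNzRingType) (A : 'M[R]_3).

Lemma mulmx_Vvec s t (i : 'I_3) :
  (A *m Vvec s t) i 0 = A i i0 * s ^+ 2 + A i i1 * (s * t) + A i i2 * t ^+ 2.
Proof.
rewrite mxE !big_ord_recr big_ord0 /= !mxE /= add0r.
by congr (A i _ * _ + A i _ * _ + A i _ * _); apply: val_inj.
Qed.

Lemma mulmx_Bmat_Vvec s t (i : 'I_3) :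
  (Bmat R *m Vvec s t) i 0 = if val i == 2%N then t ^+ 2 else 0.
Proof.
rewrite mxE !big_ord_recr big_ord0 /= !mxE /= add0r.
by case: i => [[|[|[|i]]] Hi] //=; rewrite ?mul0r ?mul1r ?addr0 ?add0r.
Qed.

Lemma F1E s t :
  F1 A s t = (A i1 i0 * s ^+ 2 + A i1 i1 * (s * t) + A i1 i2 * t ^+ 2) * t ^+ 2.
Proof. by rewrite /F1 /Fvec /cross mxE /= !mulmx_Vvec !mulmx_Bmat_Vvec /=; ring. Qed.

Lemma F2E s t :
  F2 A s t = - ((A i0 i0 * s ^+ 2 + A i0 i1 * (s * t) + A i0 i2 * t ^+ 2) * t ^+ 2).
Proof. by rewrite /F2 /Fvec /cross mxE /= !mulmx_Vvec !mulmx_Bmat_Vvec /=; ring. Qed.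

Lemma F3E s t : F3 A s t = 0.
Proof. by rewrite /F3 /Fvec /cross mxE /= !mulmx_Vvec !mulmx_Bmat_Vvec /=; ring. Qed.

Lemma QfE s t : Qf A s t = F2 A s t ^+ 2.
Proof. by rewrite /Qf F3E mulr0 subr0. Qed.

End CrossProductFormulas.

Theorem theorem11 (R : fieldType) (A : 'M[R]_3) (k l : nat -> R) :
  A^T = A ->
  (forall n, k n != 0 /\ l n != 0) ->
  (forall n, k n.+2 * l n =
     - (k n * l n.+2 + A i0 i1 * k n.+1 ^+ 2 + A i1 i1 * k n.+1 * l n.+1
        + A i1 i2 * l n.+1 ^+ 2)) ->
  (forall n, l n.+2 * l n =
     A i0 i0 * k n.+1 ^+ 2 + A i0 i1 * k n.+1 * l n.+1 + A i0 i2 * l n.+1 ^+ 2) ->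
  let r := fun n => - (l n ^+ 2 * l n.+1 ^+ 2) in
  let s := k in
  let t := l in
  forall n,
    r n.+1 * r n = Qf A (s n.+1) (t n.+1) /\
    s n.+2 * r n = t n * F1 A (s n.+1) (t n.+1) - s n * F2 A (s n.+1) (t n.+1) /\
    t n.+2 * r n = t n * F2 A (s n.+1) (t n.+1) - s n * F3 A (s n.+1) (t n.+1).
Proof.
(* The identities are polynomial. *)
move=> A_sym _ k_rec l_rec r s t n.
have A10 : A i1 i0 = A i0 i1 by rewrite -{1}A_sym mxE.
have F1_rec : F1 A (k n.+1) (l n.+1) = - (k n.+2 * l n + k n * l n.+2) * l n.+1 ^+ 2.
  by rewrite F1E A10 k_rec; ring.
have F2_rec : F2 A (k n.+1) (l n.+1) = - (l n.+2 * l n * l n.+1 ^+ 2).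
  by rewrite F2E l_rec; ring.
rewrite /r /s /t QfE F3E F1_rec F2_rec.
by split; [ring | split; ring].
Qed.
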